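(* Let $R$ be a field, $S$ an idempotent semifield and $v:R\to S$ a surjective B\'ezout valuation. Then $\operatorname{Frac}(R^\circ)=R$, $R^\circ$ is a B\'ezout domain, and $v$ is isomorphic to the valuation $\operatorname{Frac}(\pi):\operatorname{Frac}(R^\circ)\to\operatorname{Frac}(\Gamma(R^\circ))$; i.e. there is a semifield isomorphism $\Phi:\operatorname{Frac}(\Gamma(R^\circ))\to S$ with $v=\Phi\circ\operatorname{Frac}(\pi)$.
   Context: An idempotent semiring is commutative with $a+a=a$, ordered by $a\le b$ iff $a+b=b$; a semifield has nonzero elements invertible. A valuation $v:R\to S$ satisfies $v(0)=0$, $v(1)=v(-1)=1$, $v(ab)=v(a)v(b)$, $v(a+b)\le v(a)+v(b)$, $v(a)\ne0$ for $a\ne0$. $R^\circ=\{a:v(a)\le1\}$. $v$ is B\'ezout if for all $a,b\in R$ there are $x,y\in R^\circ$ with $v(xa+yb)=v(a)+v(b)$. For a B\'ezout domain $D$ (every finitely generated ideal principal), $\Gamma(D)=D/U(D)$ is the set of classes of elements up to units, an idempotent semiring with $[a][b]=[ab]$ and $[a]+[b]=[\gcd(a,b)]$; $\pi:D\to\Gamma(D)$ is the projection; $\Gamma(D)$ is multiplicatively cancellative and $\operatorname{Frac}(\pi)(a/b)=\pi(a)/\pi(b)$. *)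

From HB Require Import structures.
From mathcomp Require Import all_boot all_order all_algebra.
Set Implicit Arguments. Unset Strict Implicit. Unset Printing Implicit Defensive.
Import Order.TTheory GRing.Theory.
Local Open Scope ring_scope.

Definition idempotent_semiring (S : comNzSemiRingType) : Prop :=
  forall a : S, a + a = a.

Definition semifield (S : comNzSemiRingType) : Prop :=
  forall a : S, a != 0 -> exists b : S, a * b = 1.

Definition sle (S : comNzSemiRingType) (a b : S) : Prop := a + b = b.

Definition valuation (R : fieldType) (S : comNzSemiRingType) (v : R -> S) : Prop :=
  [/\ v 0 = 0, v 1 = 1, v (-1) = 1,
      (forall a b, v (a * b) = v a * v b) &
      ((forall a b, sle (v (a + b)) (v a + v b)) /\
       (forall a, a != 0 -> v a != 0))].

(* R° = { a | v a <= 1 } *)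
Definition vring (R : fieldType) (S : comNzSemiRingType) (v : R -> S) : pred R :=
  fun a => v a + 1 == 1.

Definition bezout_valuation (R : fieldType) (S : comNzSemiRingType) (v : R -> S)
  : Prop :=
  valuation v /\
  forall a b : R, exists x y : R,
    [/\ x \in vring v, y \in vring v & v (x * a + y * b) = v a + v b].

Section SubringOfField.
Variable R : fieldType.
Implicit Types (D : pred R) (a b c d g u x y : R).

Definition subring D : Prop :=
  [/\ 1 \in D, (forall a b, a \in D -> b \in D -> a - b \in D) &
      (forall a b, a \in D -> b \in D -> a * b \in D)].

Definition dvdD D a b : Prop := exists c, c \in D /\ b = a * c.

Definition unitD D u : Prop := [/\ u \in D, u != 0 & u^-1 \in D].

Definition assocD D a b : Prop := exists u, unitD D u /\ a = u * b.

Definition gcdD D g a b : Prop :=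
  [/\ g \in D, dvdD D g a, dvdD D g b &
      forall c, c \in D -> dvdD D c a -> dvdD D c b -> dvdD D c g].

(* D is a Bezout domain: a subring of the field R (hence an integral domain)
   in which every finitely generated ideal is principal. *)
Definition bezout_domain D : Prop :=
  subring D /\
  forall s : seq R, all (mem D) s ->
    exists d, [/\ d \in D,
      (exists cs : seq R, [/\ size cs = size s, all (mem D) cs &
          d = \sum_(i < size s) cs`_i * s`_i]) &
      forall a, a \in s -> dvdD D d a].

(* Frac(D) = R : every element of R is a quotient of elements of D *)
Definition frac_is D : Prop :=
  forall a, exists x y, [/\ x \in D, y \in D, y != 0 & a = x / y].

End SubringOfField.

(* ---------- Frac(Gamma(D)) via representatives ----------
   Elements of Gamma(D) are classes [x] of x in D up to units; elements of
   Frac(Gamma(D)) are fractions [x]/[y] with y != 0, and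
   [x]/[y] = [x']/[y'] iff [x y'] = [x' y] (Gamma(D) is cancellative).
   Operations: ([x]/[y]) * ([x']/[y']) = [x x']/[y y'],
               ([x]/[y]) + ([x']/[y']) = [gcd(x y', x' y)]/[y y'],
               0 = [0]/[1], 1 = [1]/[1].
   Frac(pi)(x/y) = pi(x)/pi(y) = [x]/[y].
   A map Phi : Frac(Gamma(D)) -> S is represented by Phi x y := Phi([x]/[y]). *)
Definition fracgamma_iso (R : fieldType) (S : comNzSemiRingType) (D : pred R)
  (Phi : R -> R -> S) : Prop :=
  let fr x y := [/\ x \in D, y \in D & y != 0] in
  [/\ (* well defined and injective on classes *)
      (forall x y x' y', fr x y -> fr x' y' ->
         (Phi x y = Phi x' y' <-> assocD D (x * y') (x' * y))),
      (forall s : S, exists x y, fr x y /\ Phi x y = s),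
      Phi 0 1 = 0 /\ Phi 1 1 = 1,
      (forall x y x' y', fr x y -> fr x' y' ->
         Phi (x * x') (y * y') = Phi x y * Phi x' y') &
      (* preserves addition *)
      (forall x y x' y' g, fr x y -> fr x' y' -> gcdD D g (x * y') (x' * y) ->
         Phi g (y * y') = Phi x y + Phi x' y')].

From HB Require Import structures.
From mathcomp Require Import all_boot all_order all_algebra.
Import GRing.Theory.
Local Open Scope ring_scope.
Set Implicit Arguments. Unset Strict Implicit.

(* For g in R°, g | a in R° exactly when v a <= v g, so divisibility in R° is
   read off the valuation. The Bézout property produces, for any a and b, an
   element of valuation v a + v b in the ideal (a, b) of R°; it divides a and
   b, so finitely generated ideals are principal and gcds have valuation
   v a + v b. Taking b = 1 writes every a as (a / d) / (1 / d) with both terms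
   in R°. Finally v a = v b exactly when a and b are associates in R°, so
   [x]/[y] |-> v (x / y) is a well-defined injective semifield morphism from
   Frac(Gamma(R°)), onto S when v is. *)

Section IdempotentOrder.
Variable S : comNzSemiRingType.
Implicit Types a b c : S.

Lemma sle_anti a b : sle a b -> sle b a -> a = b.
Proof. by rewrite /sle => hab hba; rewrite -hba addrC hab. Qed.

Lemma sle_trans a b c : sle a b -> sle b c -> sle a c.
Proof. by rewrite /sle => hab hbc; rewrite -hbc addrA hab. Qed.

Lemma sle_add a b c : sle a c -> sle b c -> sle (a + b) c.
Proof. by rewrite /sle => hac hbc; rewrite -addrA hbc hac. Qed.

Lemma sle_mul2l c a b : sle a b -> sle (c * a) (c * b).
Proof. by rewrite /sle => hab; rewrite -mulrDr hab. Qed.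

Lemma sle_mul2r c a b : sle a b -> sle (a * c) (b * c).
Proof. by rewrite /sle => hab; rewrite -mulrDl hab. Qed.

Lemma sle0_eq0 a : sle a 0 -> a = 0.
Proof. by rewrite /sle addr0. Qed.

Hypothesis hidem : idempotent_semiring S.

Lemma sle_refl a : sle a a.
Proof. exact: hidem. Qed.

Lemma sle_addl a b : sle a (a + b).
Proof. by rewrite /sle addrA hidem. Qed.

Lemma sle_addr a b : sle b (a + b).
Proof. by rewrite addrC; apply: sle_addl. Qed.

End IdempotentOrder.

Section Valuation.
Variables (R : fieldType) (S : comNzSemiRingType) (v : R -> S).
Hypothesis hv : valuation v.
Local Notation D := (vring v).
Implicit Types a b g u x y : R.

Lemma val0 : v 0 = 0. Proof. by case: hv. Qed.
Lemma val1 : v 1 = 1. Proof. by case: hv. Qed.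
Lemma valM a b : v (a * b) = v a * v b. Proof. by case: hv. Qed.
Lemma valD a b : sle (v (a + b)) (v a + v b). Proof. by case: hv => _ _ _ _ []. Qed.

Lemma val_eq0 a : (v a == 0) = (a == 0).
Proof.
case: hv => v0 _ _ _ [_ vnz].
by have [->|/vnz/negPf] := eqVneq a 0; rewrite ?v0 ?eqxx.
Qed.

Lemma valN a : v (- a) = v a.
Proof. by case: hv => _ _ vN1 _ _; rewrite -mulN1r valM vN1 mul1r. Qed.

Lemma val_mulV a : a != 0 -> v a * v a^-1 = 1.
Proof. by move=> a_neq0; rewrite -valM mulfV ?val1. Qed.

Lemma val_div_mulr x y z : z != 0 -> v (x / y) = v (x * z) * v (y * z)^-1.
Proof. by move=> z_neq0; rewrite -valM -mulf_div divff ?mulr1. Qed.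

Lemma val_div_eq x y x' y' : y != 0 -> y' != 0 ->
  v (x / y) = v (x' / y') <-> v (x * y') = v (x' * y).
Proof.
move=> y_neq0 y'_neq0; have yy'_neq0 : y * y' != 0 by rewrite mulf_neq0.
rewrite (val_div_mulr x y y'_neq0) (val_div_mulr x' y' y_neq0) [y' * y]mulrC.
split=> [/(congr1 ( *%R^~ (v (y * y'))))|->] //.
by rewrite -!mulrA [_ * v (y * y')]mulrC val_mulV // !mulr1.
Qed.

Lemma vringP a : reflect (sle (v a) 1) (a \in D).
Proof. exact: eqP. Qed.

Lemma vring0 : 0 \in D.
Proof. by apply/vringP; rewrite val0 /sle add0r. Qed.

Lemma vringN a : a \in D -> - a \in D.
Proof. by move=> /vringP Da; apply/vringP; rewrite valN. Qed.

Lemma vringM a b : a \in D -> b \in D -> a * b \in D.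
Proof.
move=> /vringP Da /vringP Db; apply/vringP; rewrite valM.
by apply: sle_trans (Da); rewrite -[X in sle _ X]mulr1; apply: sle_mul2l.
Qed.

Lemma dvd_vringP g a : dvdD D g a <-> sle (v a) (v g).
Proof.
split=> [[c [/vringP Dc ->]]|le_ag].
  by rewrite valM -[X in sle _ X]mulr1; apply: sle_mul2l.
have [g0|g_neq0] := eqVneq g 0.
  move: le_ag; rewrite g0 val0 => /sle0_eq0/eqP; rewrite val_eq0 => /eqP ->.
  by exists 0; rewrite mulr0 vring0.
exists (a / g); split; last by rewrite mulrC divfK.
by apply/vringP; rewrite valM -(val_mulV g_neq0); apply: sle_mul2r.
Qed.

Lemma val_unit u : unitD D u -> v u = 1.
Proof.
case=> /vringP Du u_neq0 /vringP Dui; apply: sle_anti => //.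
by rewrite -(val_mulV u_neq0) -[X in sle _ X]mulr1; apply: sle_mul2l.
Qed.

Hypothesis hidem : idempotent_semiring S.

Lemma vring1 : 1 \in D.
Proof. by apply/vringP; rewrite val1; apply: sle_refl. Qed.

Lemma vringD a b : a \in D -> b \in D -> a + b \in D.
Proof.
by move=> /vringP Da /vringP Db; apply/vringP/(sle_trans (valD a b))/sle_add.
Qed.

Lemma vring_subring : subring D.
Proof.
by split=> [|a b Da Db|]; [exact: vring1 | rewrite vringD ?vringN | exact: vringM].
Qed.

Lemma assoc_vringP a b : assocD D a b <-> v a = v b.
Proof.
split=> [[u [/val_unit vu ->]]|vab]; first by rewrite valM vu mul1r.
have [b0|b_neq0] := eqVneq b 0.
  move/eqP: vab; rewrite b0 val0 val_eq0 => /eqP ->.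
  by exists 1; rewrite mulr0; split=> //; split; rewrite ?oner_neq0 ?invr1 ?vring1.
have a_neq0 : a != 0 by rewrite -val_eq0 vab val_eq0.
have v_ab : v (a / b) = 1 by rewrite valM vab val_mulV.
exists (a / b); split; last by rewrite divfK.
split; first by apply/vringP; rewrite v_ab; apply: sle_refl.
  by rewrite mulf_neq0 ?invr_eq0.
apply/vringP; rewrite invf_div valM -vab val_mulV //; apply: sle_refl.
Qed.

Hypothesis hbez : forall a b, exists x y,
  [/\ x \in D, y \in D & v (x * a + y * b) = v a + v b].

Lemma bezout_comb a b : exists x y, [/\ x \in D, y \in D,
  dvdD D (x * a + y * b) a & dvdD D (x * a + y * b) b].
Proof.
have [x [y [Dx Dy vh]]] := hbez a b; exists x, y.
by split=> //; apply/dvd_vringP; rewrite vh; [apply: sle_addl | apply: sle_addr].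
Qed.

Lemma vring_bezout_domain : bezout_domain D.
Proof.
split; first exact: vring_subring.
elim=> [_|a s IHs /= /andP[Da Ds]].
  by exists 0; rewrite vring0; split=> //; exists [::]; rewrite big_ord0.
have [d [Dd [cs [size_cs Dcs ed]] d_dvd]] := IHs Ds.
have [x [y [Dx Dy h_dvd_a h_dvd_d]]] := bezout_comb a d.
exists (x * a + y * d); split.
- by rewrite vringD ?vringM.
- exists (x :: map ( *%R y) cs); split.
  + by rewrite /= size_map size_cs.
  + by rewrite /= Dx all_map; apply/allP => c /(allP Dcs) Dc /=; rewrite vringM.
  + rewrite big_ord_recl ed mulr_sumr; congr (_ + _); apply: eq_bigr => i _.
    by rewrite /= add0n (nth_map 0) ?mulrA ?size_cs.
- move=> b; rewrite inE => /predU1P[-> //|/d_dvd/dvd_vringP le_bd].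
  by apply/dvd_vringP/(sle_trans le_bd)/dvd_vringP.
Qed.

Lemma gcd_vring_val g a b : gcdD D g a b -> v g = v a + v b.
Proof.
case=> Dg g_dvd_a g_dvd_b g_max; apply: sle_anti; last first.
  by apply: sle_add; apply/dvd_vringP.
have [x [y [Dx Dy vh]]] := hbez a b.
have [Da Db] : a \in D /\ b \in D.
  by case: g_dvd_a g_dvd_b => [c [Dc ->]] [c' [Dc' ->]]; rewrite !vringM.
rewrite -vh; apply/dvd_vringP/g_max; first by rewrite vringD ?vringM.
  by apply/dvd_vringP; rewrite vh; apply: sle_addl.
by apply/dvd_vringP; rewrite vh; apply: sle_addr.
Qed.

Lemma vring_frac : frac_is D.
Proof.
move=> a; have [x [y [_ _ vd]]] := hbez a 1; set d := x * a + y * 1 in vd.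
have [c [Dc ec]] : dvdD D d a by apply/dvd_vringP; rewrite vd; apply: sle_addl.
have [c' [Dc' ec']] : dvdD D d 1 by apply/dvd_vringP; rewrite vd; apply: sle_addr.
have c'_neq0 : c' != 0 by apply: contra_eq_neq ec' => ->; rewrite mulr0 oner_neq0.
exists c, c'; split=> //.
by apply: (canRL (mulfK c'_neq0)); rewrite ec mulrAC -ec' mul1r.
Qed.

Lemma vring_fracgamma_iso : (forall s : S, exists a, v a = s) ->
  fracgamma_iso D (fun x y => v (x / y)).
Proof.
move=> vsurj; split.
- move=> x y x' y' [_ _ y_neq0] [_ _ y'_neq0].
  exact: iff_trans (val_div_eq _ _ y_neq0 y'_neq0) (iff_sym (assoc_vringP _ _)).
- move=> s; have [a <-] := vsurj s; have [x [y [Dx Dy y_neq0 ->]]] := vring_frac a.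
  by exists x, y.
- by rewrite !divr1 val0 val1.
- by move=> x y x' y' _ _; rewrite -valM mulf_div.
- move=> x y x' y' g [_ _ y_neq0] [_ _ y'_neq0] /gcd_vring_val vg.
  rewrite (val_div_mulr x y y'_neq0) (val_div_mulr x' y' y_neq0) [y' * y]mulrC.
  by rewrite valM vg mulrDl.
Qed.

End Valuation.

Theorem lemma2p15 (R : fieldType) (S : comNzSemiRingType) (v : R -> S)
  (hidem : idempotent_semiring S) (hsf : semifield S)
  (hv : bezout_valuation v) (hsurj : forall s : S, exists a : R, v a = s) :
  [/\ frac_is (vring v),
      bezout_domain (vring v) &
      exists Phi : R -> R -> S,
        fracgamma_iso (vring v) Phi /\
        (forall x y, x \in vring v -> y \in vring v -> y != 0 ->
           v (x / y) = Phi x y)].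
Proof.
have [hval hbez] := hv.
split; first exact: vring_frac hbez.
  exact: vring_bezout_domain hbez.
exists (fun x y => v (x / y)); split=> //.
exact: vring_fracgamma_iso.
Qed.
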